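(* Let $\varepsilon$ be an integer with $\varepsilon\equiv 0\pmod{4}$. Then there exist infinitely many positive odd integers $n$ with the property that there exist positive integers $d_1, d_2$, each dividing $\frac{n^2+1}{2}$, such that $d_1+d_2=2n+\varepsilon$. *)

From mathcomp Require Import all_boot all_algebra.

(* Write eps = 4t and q = 2t^2 - 2t + 1 >= 1.  It suffices to find integers
   a, b, n >= 1 with a + b = 2n + eps and n^2 + 1 = 2qab, since then
   (n^2 + 1)/2 = qab is divisible by a and by b.  The triple
   (1, 16t^2 - 8t + 5, 8t^2 - 6t + 3) is such a solution, and Vieta jumping
   (a, b) |-> (b, (8q - 2)b + 2eps - a), the other root of the quadratic in a,
   turns any solution into one with a strictly larger b; iterating makes n
   arbitrarily large. *)

From mathcomp Require Import all_boot all_algebra.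
From mathcomp Require Import zify ring lra.
Import GRing.Theory Num.Theory.

Local Open Scope ring_scope.

Definition vieta_triple {R : comNzRingType} (q e a b n : R) :=
  a + b = 2 * n + e /\ n ^+ 2 + 1 = 2 * q * a * b.

Lemma vieta_triple_base (R : comNzRingType) (t : R) :
  vieta_triple (2 * t ^+ 2 - 2 * t + 1) (4 * t)
    1 (16 * t ^+ 2 - 8 * t + 5) (8 * t ^+ 2 - 6 * t + 3).
Proof. by split; ring. Qed.

Lemma vieta_jump (R : comNzRingType) (q e a b n : R) :
  vieta_triple q e a b n ->
  vieta_triple q e b ((8 * q - 2) * b + 2 * e - a) (4 * q * b - n).
Proof.
move=> [sum_ab prod_ab].
have a_eq : a = 2 * n + e - b by rewrite -sum_ab addrK.
split; first by rewrite a_eq; ring.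
have -> : (4 * q * b - n) ^+ 2 + 1 = n ^+ 2 + 1 + 16 * q ^+ 2 * b ^+ 2 - 8 * q * b * n
  by ring.
by rewrite prod_ab a_eq; ring.
Qed.

Lemma vieta_jump_gt (R : realDomainType) (q e a b : R) :
  1 <= q -> 1 <= a <= b -> `|e| <= b -> b < (8 * q - 2) * b + 2 * e - a.
Proof.
move=> q_ge1 /andP[a_ge1 a_le_b]; rewrite ler_norml => /andP[e_ge e_le].
have : 0 <= (q - 1) * b by apply: mulr_ge0; lra.
lra.
Qed.

Lemma vieta_triple_large (t : int) (j : nat) :
  exists a b n : int, [/\ vieta_triple (2 * t ^+ 2 - 2 * t + 1) (4 * t) a b n,
    1 <= a, a <= b & `|4 * t| + j%:Z <= b].
Proof.
have q_ge1 : 1 <= 2 * t ^+ 2 - 2 * t + 1 by nia.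
elim: j => [|j [a [b [n [vt a_ge1 a_le_b b_large]]]]].
  by exists 1, (16 * t ^+ 2 - 8 * t + 5), (8 * t ^+ 2 - 6 * t + 3);
     split; [exact: vieta_triple_base | by [] | nia | nia].
set q := 2 * t ^+ 2 - 2 * t + 1 in vt *.
have b_lt : b < (8 * q - 2) * b + 2 * (4 * t) - a.
  by apply: vieta_jump_gt => //; [apply/andP | lia].
exists b, ((8 * q - 2) * b + 2 * (4 * t) - a), (4 * q * b - n).
by split; [exact: vieta_jump | lia | lia | lia].
Qed.

Local Close Scope ring_scope.

Lemma half_sqrS_eq (n m : nat) : n ^ 2 + 1 = 2 * m -> odd n /\ (n ^ 2 + 1) %/ 2 = m.
Proof.
move=> nE; split; last by rewrite nE mulKn.
by have := congr1 odd nE; rewrite oddD oddX oddM /=; case: (odd n).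
Qed.

Theorem theorem1 (eps : int) (heps : (eps %% 4)%Z = 0) :
  forall N : nat, exists n : nat,
    [/\ (N < n)%N, odd n &
      exists d1 d2 : nat,
        [/\ (0 < d1)%N, (0 < d2)%N,
            d1 %| (n ^ 2 + 1) %/ 2, d2 %| (n ^ 2 + 1) %/ 2 &
            (d1%:Z + d2%:Z = 2 * n%:Z + eps)%R]].
Proof.
move=> N.
have [t ->] : exists t : int, eps = (4 * t)%R.
  by exists (eps %/ 4)%Z; rewrite {1}(divz_eq eps 4) heps addr0 mulrC.
have [a [b [n [[sum_ab prod_ab] a_ge1 a_le_b b_large]]]] := vieta_triple_large t (2 * N).
have q_ge1 : (1 <= 2 * t ^+ 2 - 2 * t + 1)%R by nia.
have [n_odd half_eq] :
    odd `|n| /\ (`|n| ^ 2 + 1) %/ 2 = absz (2 * t ^+ 2 - 2 * t + 1)%R * `|a| * `|b|.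
  apply: half_sqrS_eq; apply/eqP.
  by rewrite -mulnn -eqz_nat PoszD !PoszM !gez0_abs; lia.
exists `|n|%N; rewrite half_eq; split; [lia | exact: n_odd |].
exists `|a|%N, `|b|%N; split; [lia | lia | | | lia].
- by rewrite mulnAC dvdn_mull.
- exact: dvdn_mull.
Qed.
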